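(* If $v_1$ and $v_2$ are submodular valuations on a finite set $X$ with disjoint supports (i.e., $v_i(\{x\})>0$ implies $v_j(\{x\})=0$ for $\{i,j\}=\{1,2\}$), then $v_1\vee v_2$ is submodular.
   Context: A valuation on a finite set $X$ is a function $v:2^X\to\mathbb{R}_{\ge 0}$ with $v(\emptyset)=0$ and monotone under inclusion; it is submodular if $v(A)+v(B)\ge v(A\cup B)+v(A\cap B)$ for all $A,B\subseteq X$. $(v_1\vee v_2)(S)=\max_{T\subseteq S}(v_1(T)+v_2(S\setminus T))$. *)

From mathcomp Require Import all_boot all_order all_algebra.
Set Implicit Arguments. Unset Strict Implicit. Unset Printing Implicit Defensive.
Import Order.TTheory GRing.Theory Num.Theory.
Local Open Scope ring_scope.

Definition valuation (R : realFieldType) (X : finType) (v : {set X} -> R) : Prop :=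
  [/\ v set0 = 0,
      (forall A, 0 <= v A) &
      (forall A B : {set X}, A \subset B -> v A <= v B)].

Definition submodular (R : realFieldType) (X : finType) (v : {set X} -> R) : Prop :=
  forall A B : {set X}, v (A :|: B) + v (A :&: B) <= v A + v B.

(* (v1 \/ v2)(S) = max_{T subset S} (v1 T + v2 (S \ T)).  The big max starts
   from 0, which is harmless since all terms are nonnegative for valuations
   (and T = set0 is always in the range). *)
Definition vjoin (R : realFieldType) (X : finType) (v1 v2 : {set X} -> R)
  (S : {set X}) : R :=
  \big[Num.max/0]_(T : {set X} | T \subset S) (v1 T + v2 (S :\: T)).

From mathcomp Require Import all_boot all_order all_algebra.
Import Order.TTheory GRing.Theory Num.Theory.
Local Open Scope ring_scope.

(* For a submodular valuation, removing elements of zero singleton value never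
   changes the value of a set.  Hence with disjoint supports, taking [T] to be
   [S] minus the null elements of [v1] gives [v1 T = v1 S] and
   [v2 (S :\: T) = v2 S], so the maximum defining [v1 \/ v2] is attained and
   equals [v1 S + v2 S]; a sum of submodular functions is submodular.  Only one
   direction of the disjointness hypothesis is needed. *)

Section NullElements.

Variables (R : realFieldType) (X : finType) (v : {set X} -> R).
Hypotheses (val_v : valuation v) (sub_v : submodular v).

Lemma submodular_setD1_null (x : X) (B : {set X}) :
  v [set x] = 0 -> v (B :\ x) = v B.
Proof.
case: val_v => _ v_ge0 v_mono vx0.
apply/eqP; rewrite eq_le v_mono ?subsetDl //=.
have B_sub : B \subset (B :\ x) :|: [set x].
  by apply/subsetP => y yB; rewrite !inE yB; case: (y == x).
have := sub_v (B :\ x) [set x]; rewrite vx0 addr0 => vsub.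
apply: le_trans (v_mono _ _ B_sub) _; apply: le_trans vsub.
by rewrite lerDl.
Qed.

Lemma submodular_setD_null (Z A : {set X}) :
  {in Z, forall x, v [set x] = 0} -> v (A :\: Z) = v A.
Proof.
have [n] := ubnP #|Z|; elim: n Z => // n IH Z /ltnSE cardZ Z_null.
have [->|[x xZ]] := set_0Vmem Z; first by rewrite setD0.
rewrite -(setD1K xZ) setUC -setDDl submodular_setD1_null ?Z_null //.
apply: IH => [|y /setD1P [_ /Z_null] //].
by move: cardZ; rewrite (cardsD1 x) xZ.
Qed.

End NullElements.

Lemma submodularD {R : realFieldType} {X : finType} {v1 v2 : {set X} -> R} :
  submodular v1 -> submodular v2 -> submodular (fun S => v1 S + v2 S).
Proof.
move=> sub1 sub2 A B.
by rewrite addrACA [leRHS]addrACA lerD.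
Qed.

Lemma vjoin_le_add {R : realFieldType} {X : finType} {v1 v2 : {set X} -> R}
    (S : {set X}) :
  valuation v1 -> valuation v2 -> vjoin v1 v2 S <= v1 S + v2 S.
Proof.
case=> _ ge1 mono1 [_ ge2 mono2].
apply: bigmax_le => [|T TS]; first by rewrite addr_ge0.
by rewrite lerD ?mono1 ?mono2 ?subsetDl.
Qed.

Lemma vjoin_disjoint_supports {R : realFieldType} {X : finType}
    {v1 v2 : {set X} -> R} :
  valuation v1 -> valuation v2 -> submodular v1 -> submodular v2 ->
  (forall x : X, 0 < v1 [set x] -> v2 [set x] = 0) ->
  forall S, vjoin v1 v2 S = v1 S + v2 S.
Proof.
move=> val1 val2 sub1 sub2 supp12 S.
apply/eqP; rewrite eq_le vjoin_le_add //=.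
set Z1 := [set x | v1 [set x] == 0].
have v1_null : {in Z1, forall x, v1 [set x] = 0} by move=> x; rewrite inE => /eqP.
have v2_null : {in ~: Z1, forall x, v2 [set x] = 0}.
  move=> x; rewrite !inE => x_supp; apply: supp12.
  by case: val1 => _ ge1 _; rewrite lt_def x_supp ge1.
have -> : v1 S + v2 S = v1 (S :\: Z1) + v2 (S :\: (S :\: Z1)).
  rewrite submodular_setD_null // setDDr setDv set0U -[Z1]setCK -setDE.
  by rewrite submodular_setD_null.
rewrite /vjoin.
exact: (le_bigmax_cond _ (fun T => v1 T + v2 (S :\: T)) (subsetDl S Z1)).
Qed.

Theorem proposition4 (R : realFieldType) (X : finType) (v1 v2 : {set X} -> R) :
  valuation v1 -> valuation v2 -> submodular v1 -> submodular v2 ->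
  (forall x : X, 0 < v1 [set x] -> v2 [set x] = 0) ->
  (forall x : X, 0 < v2 [set x] -> v1 [set x] = 0) ->
  submodular (vjoin v1 v2).
Proof.
move=> val1 val2 sub1 sub2 supp12 _ A B.
rewrite !(vjoin_disjoint_supports val1 val2 sub1 sub2 supp12).
exact: (submodularD sub1 sub2).
Qed.
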